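(* Let $F:(M_1(c),g_1)\to(M_2,g_2)$ be a Riemannian submersion from a complex space form with $\dim M_1=n=2k$ onto a Riemannian manifold with $\dim M_2=m$ and fibre dimension $r=\dim\mathcal V_p>2$. Let $p\in M_1$, $\Pi\subset\mathcal V_p$ a $2$-plane, $\{V_1,\dots,V_r\}$ an orthonormal basis of $\mathcal V_p$ with $\Pi=\mathrm{span}\{V_1,V_2\}$, and $\{h_1,\dots,h_s\}$ an orthonormal basis of $\mathcal H_p$. Then $$\tau^{\ker F_*}_{\mathcal V}(p)-K^{\ker F_*}_{\mathcal V}(\Pi)\ge\frac12\Big\{\frac c4(r^2-r-2)+\frac{3c}4\big(\|Q\|^2-2\,g_1(V_1,QV_2)^2\big)-\frac{r^2(r-2)}{r-1}\|H\|^2\Big\},$$ with equality if and only if Condition (E) holds at $p$ for $\Pi$.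
   Context: A complex space form $M_1(c)$ is a Kähler manifold $(M_1,J,g_1)$ ($\nabla J=0$) of constant holomorphic sectional curvature $c$, whose curvature is $R(Z_1,Z_2)Z_3=\frac c4\{g_1(Z_2,Z_3)Z_1-g_1(Z_1,Z_3)Z_2\}+\frac c4\{g_1(Z_1,JZ_3)JZ_2-g_1(Z_2,JZ_3)JZ_1+2g_1(Z_1,JZ_2)JZ_3\}$. For a tangent vector $Z$ write $JZ=PZ+QZ$ with $PZ\in\mathcal H$, $QZ\in\mathcal V$, and $\|Q\|^2=\sum_{i,j=1}^r g_1(QV_i,V_j)^2$. Let $(M_1,g_1)$, $(M_2,g_2)$ be Riemannian manifolds, $\dim M_1=n$, $\dim M_2=m$, and $F:M_1\to M_2$ a Riemannian submersion (a surjective smooth map whose differential $F_{*p}$ is surjective at every $p$ and preserves the length of horizontal vectors). Write $\mathcal V=\ker F_*$ (vertical distribution), $\mathcal H=(\ker F_* )^\perp$ (horizontal distribution), $r=\dim\mathcal V_p=n-m$, $s=\dim\mathcal H_p=m$; $v,h$ denote the orthogonal projections onto $\mathcal V,\mathcal H$, and $\nabla$ the Levi-Civita connection of $g_1$. O'Neill's tensor: $\mathcal T_EF=h\nabla_{vE}vF+v\nabla_{vE}hF$. Curvature convention: $R^{M_1}(X,Y,Z,W)=g_1(R^{M_1}(X,Y)Z,W)$, normalized so that $R^{M_1}(X,Y,Y,X)$ is the sectional curvature of the plane spanned by orthonormal $X,Y$. The curvature $R^{\ker F_*}$ of the fibres is related to $R^{M_1}$ (as used in the paper) by: for vertical $F_1,\dots,F_4$,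 $R^{M_1}(F_1,F_2,F_3,F_4)=R^{\ker F_*}(F_1,F_2,F_3,F_4)+g_1(\mathcal T_{F_1}F_4,\mathcal T_{F_2}F_3)-g_1(\mathcal T_{F_2}F_4,\mathcal T_{F_1}F_3)$. With the chosen orthonormal bases at $p$: $(\mathcal T^{\mathcal H})^\ell_{ij}=g_1(\mathcal T_{V_i}V_j,h_\ell)$; the mean curvature vector of the fibres is $H=\frac1r\sum_{i=1}^r\mathcal T_{V_i}V_i$; $\tau^{\ker F_*}_{\mathcal V}(p)=\frac12\sum_{i,j=1}^rR^{\ker F_*}(V_i,V_j,V_j,V_i)$, $K^{\ker F_*}_{\mathcal V}(\Pi)=R^{\ker F_*}(V_1,V_2,V_2,V_1)$ for $\Pi=\mathrm{span}\{V_1,V_2\}$. Condition (E) at $p$ for $\Pi$: there exist orthonormal bases $\{V_1,\dots,V_r\}$ of $\mathcal V_p$ with $\Pi=\mathrm{span}\{V_1,V_2\}$ and $\{h_1,\dots,h_s\}$ of $\mathcal H_p$ with $h_1=H(p)/\|H(p)\|$ if $H(p)\neq0$ ($h_1$ arbitrary if $H(p)=0$), such that: $(\mathcal T^{\mathcal H})^\ell_{1j}=(\mathcal T^{\mathcal H})^\ell_{2j}=0$ for $j>2$, $\ell=1,\dots,s$; $(\mathcal T^{\mathcal H})^1_{ij}=0$ for $i\ne j$, $i,j>2$; $(\mathcal T^{\mathcal H})^\ell_{ij}=0$ for $i,j>2$, $\ell=2,\dots,s$; $(\mathcal T^{\mathcal H})^\ell_{11}+(\mathcal T^{\mathcal H})^\ell_{22}=0$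 for $\ell=2,\dots,s$; and $(\mathcal T^{\mathcal H})^1_{11}+(\mathcal T^{\mathcal H})^1_{22}=(\mathcal T^{\mathcal H})^1_{33}=\cdots=(\mathcal T^{\mathcal H})^1_{rr}$. *)

From HB Require Import structures.
From mathcomp Require Import all_boot all_order all_algebra.
From mathcomp Require Import reals.
Set Implicit Arguments. Unset Strict Implicit. Unset Printing Implicit Defensive.
Import Order.TTheory GRing.Theory Num.Theory.
Local Open Scope ring_scope.

(* Pointwise model: the tangent space T_p M_1 is 'rV[R]_n with the standard
   inner product g_1(u,v) = u v^T; a tangent endomorphism A acts by u |-> u *m A. *)
Definition gdot (R : ringType) (n : nat) (u v : 'rV[R]_n) : R := (u *m v^T) 0 0.

Definition RM (R : realType) (n : nat) (c : R) (J : 'M[R]_n)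
  (X Y Z W : 'rV[R]_n) : R :=
  gdot (c / 4 *: (gdot Y Z *: X - gdot X Z *: Y)
        + c / 4 *: (gdot X (Z *m J) *: (Y *m J) - gdot Y (Z *m J) *: (X *m J)
                    + (2 * gdot X (Y *m J)) *: (Z *m J))) W.

(* Curvature of the fibres, through the Gauss-type equation of the paper:
   R^{M_1}(F1,F2,F3,F4) = R^{ker}(F1,F2,F3,F4) + g(T_{F1}F4, T_{F2}F3) - g(T_{F2}F4, T_{F1}F3). *)
Definition Rker (R : realType) (n : nat) (c : R) (J : 'M[R]_n)
  (T : 'rV[R]_n -> 'rV[R]_n -> 'rV[R]_n) (X Y Z W : 'rV[R]_n) : R :=
  RM c J X Y Z W - gdot (T X W) (T Y Z) + gdot (T Y W) (T X Z).

(* Bases are indexed by nat; only the indices 0..r-1 (resp. 0..s-1) matter.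
   Index 0 is the paper's V_1, index 1 is V_2, etc. *)
Definition orthonormal (R : realType) (n r : nat) (V : nat -> 'rV[R]_n) : Prop :=
  forall i j, (i < r)%N -> (j < r)%N -> gdot (V i) (V j) = (i == j)%:R.

(* {V_0..V_{r-1}} orthonormal basis of the vertical space (row space of Vsp, of rank r). *)
Definition isVbasis (R : realType) (n : nat) (Vsp : 'M[R]_n) (r : nat)
  (V : nat -> 'rV[R]_n) : Prop :=
  orthonormal r V /\ (forall i, (i < r)%N -> (V i <= Vsp)%MS).

Definition horizontal (R : realType) (n : nat) (Vsp : 'M[R]_n) (u : 'rV[R]_n) : Prop :=
  u *m Vsp^T = 0.

Definition isHbasis (R : realType) (n : nat) (Vsp : 'M[R]_n) (s : nat)
  (h : nat -> 'rV[R]_n) : Prop :=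
  orthonormal s h /\ (forall l, (l < s)%N -> horizontal Vsp (h l)).

Definition meanCurv (R : realType) (n : nat) (T : 'rV[R]_n -> 'rV[R]_n -> 'rV[R]_n)
  (r : nat) (V : nat -> 'rV[R]_n) : 'rV[R]_n :=
  (r%:R)^-1 *: \sum_(i < r) T (V i) (V i).

Definition normsq (R : realType) (n : nat) (u : 'rV[R]_n) : R := gdot u u.

Definition tauV (R : realType) (n : nat) (c : R) (J : 'M[R]_n)
  (T : 'rV[R]_n -> 'rV[R]_n -> 'rV[R]_n) (r : nat) (V : nat -> 'rV[R]_n) : R :=
  2^-1 * \sum_(i < r) \sum_(j < r) Rker c J T (V i) (V j) (V j) (V i).

Definition KV (R : realType) (n : nat) (c : R) (J : 'M[R]_n)
  (T : 'rV[R]_n -> 'rV[R]_n -> 'rV[R]_n) (V : nat -> 'rV[R]_n) : R :=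
  Rker c J T (V 0%N) (V 1%N) (V 1%N) (V 0%N).

Definition vpart (R : realType) (n r : nat) (V : nat -> 'rV[R]_n) (u : 'rV[R]_n) : 'rV[R]_n :=
  \sum_(i < r) gdot u (V i) *: V i.

Definition Qop (R : realType) (n r : nat) (J : 'M[R]_n) (V : nat -> 'rV[R]_n)
  (u : 'rV[R]_n) : 'rV[R]_n := vpart r V (u *m J).

Definition normQ2 (R : realType) (n r : nat) (J : 'M[R]_n) (V : nat -> 'rV[R]_n) : R :=
  \sum_(i < r) \sum_(j < r) (gdot (Qop r J V (V i)) (V j)) ^+ 2.

(* Condition (E) at p for Pi = span{V 0, V 1} (0-based indices: the paper's
   "j > 2" becomes 2 <= j, "l = 2..s" becomes 1 <= l < s, h_1 is h' 0). *)
Definition condE (R : realType) (n : nat) (Vsp : 'M[R]_n)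
  (T : 'rV[R]_n -> 'rV[R]_n -> 'rV[R]_n) (r s : nat) (V : nat -> 'rV[R]_n) : Prop :=
  exists V' h' : nat -> 'rV[R]_n,
    [/\ isVbasis Vsp r V', isHbasis Vsp s h',
        (col_mx (V' 0%N) (V' 1%N) == col_mx (V 0%N) (V 1%N))%MS,
        (let H := meanCurv T r V' in
         H != 0 -> h' 0%N = (Num.sqrt (normsq H))^-1 *: H) &
        (let Tc l i j := gdot (T (V' i) (V' j)) (h' l) in
         [/\ (forall l j, (l < s)%N -> (2 <= j < r)%N -> Tc l 0%N j = 0 /\ Tc l 1%N j = 0),
             (forall i j, (2 <= i < r)%N -> (2 <= j < r)%N -> i <> j -> Tc 0%N i j = 0),
             (forall l i j, (1 <= l < s)%N -> (2 <= i < r)%N -> (2 <= j < r)%N -> Tc l i j = 0),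
             (forall l, (1 <= l < s)%N -> Tc l 0%N 0%N + Tc l 1%N 1%N = 0) &
             (forall j, (2 <= j < r)%N -> Tc 0%N 0%N 0%N + Tc 0%N 1%N 1%N = Tc 0%N j j)])].

From Pilot Require Import Defs.
From mathcomp Require Import all_boot all_order all_algebra.
From mathcomp Require Import reals.
From mathcomp Require Import ring lra.
Import Order.TTheory GRing.Theory Num.Theory.
Set Implicit Arguments. Unset Strict Implicit. Unset Printing Implicit Defensive.
Local Open Scope ring_scope.

(* By the Gauss equation of the fibres and the curvature tensor of M_1(c), tau - K minus
   the right-hand side depends only on t_ij = T(V_i, V_j), and equals one half of
     2 sum_{j>2} (|t_1j|^2 + |t_2j|^2) + sum_{i<>j, i,j>2} |t_ij|^2
       + |t_11 + t_22 - mu|^2 + sum_{i>2} |t_ii - mu|^2,     mu = (sum_i t_ii) / (r - 1).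
   This gives the inequality, and equality holds iff t has the shape of condition (E) written
   with vectors.  The defect is built from traces over the fibre and over Pi and from the Gauss
   term of Pi, so it does not depend on the orthonormal basis adapted to Pi; and when t has
   that shape, t_11 + t_22 is a multiple of H, so reflecting the horizontal basis to make h_1
   point along H yields condition (E) in coordinates. *)

Section InnerProduct.
Variables (R : comNzRingType) (n : nat).
Implicit Types (a : R) (u v w : 'rV[R]_n).

Lemma gdotE u v : gdot u v = \sum_j u 0 j * v 0 j.
Proof. by rewrite /gdot mxE; apply: eq_bigr => j _; rewrite mxE. Qed.

Lemma gdotC u v : gdot u v = gdot v u.
Proof. by rewrite !gdotE; apply: eq_bigr => j _; rewrite mulrC. Qed.

Lemma gdotDl u v w : gdot (u + v) w = gdot u w + gdot v w.
Proof. by rewrite /gdot mulmxDl mxE. Qed.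

Lemma gdotZl a u v : gdot (a *: u) v = a * gdot u v.
Proof. by rewrite /gdot -scalemxAl mxE. Qed.

Lemma gdotNl u v : gdot (- u) v = - gdot u v.
Proof. by rewrite /gdot mulNmx mxE. Qed.

Lemma gdotBl u v w : gdot (u - v) w = gdot u w - gdot v w.
Proof. by rewrite gdotDl gdotNl. Qed.

Lemma gdot0l v : gdot 0 v = 0.
Proof. by rewrite /gdot mul0mx mxE. Qed.

Lemma gdot_suml I (s : seq I) (P : pred I) (f : I -> 'rV[R]_n) v :
  gdot (\sum_(i <- s | P i) f i) v = \sum_(i <- s | P i) gdot (f i) v.
Proof. by rewrite /gdot mulmx_suml summxE. Qed.

Lemma gdotDr u v w : gdot w (u + v) = gdot w u + gdot w v.
Proof. by rewrite !(gdotC w) gdotDl. Qed.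

Lemma gdotZr a u v : gdot v (a *: u) = a * gdot v u.
Proof. by rewrite !(gdotC v) gdotZl. Qed.

Lemma gdotBr u v w : gdot w (u - v) = gdot w u - gdot w v.
Proof. by rewrite !(gdotC w) gdotBl. Qed.

Lemma gdot_sumr I (s : seq I) (P : pred I) (f : I -> 'rV[R]_n) v :
  gdot v (\sum_(i <- s | P i) f i) = \sum_(i <- s | P i) gdot v (f i).
Proof. by rewrite gdotC gdot_suml; apply: eq_bigr => i _; rewrite gdotC. Qed.

End InnerProduct.

Section PositiveInnerProduct.
Variables (R : realDomainType) (n : nat).
Implicit Types (u : 'rV[R]_n).

Lemma gdot_ge0 u : 0 <= gdot u u.
Proof. by rewrite gdotE; apply: sumr_ge0 => j _; rewrite -expr2 sqr_ge0. Qed.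

Lemma gdot_eq0 u : (gdot u u == 0) = (u == 0).
Proof.
apply/eqP/eqP => [|->]; last by rewrite gdot0l.
rewrite gdotE => u0; apply/rowP => j; rewrite mxE.
have sq0 (i : 'I_n) : true -> 0 <= u 0 i * u 0 i by rewrite -expr2 sqr_ge0.
by have /eqP := psumr_eq0P sq0 u0 (i := j) isT; rewrite mulf_eq0 orbb => /eqP.
Qed.

End PositiveInnerProduct.

Section Reflection.
Variables (R : realFieldType) (n : nat).
Implicit Types (u v w e : 'rV[R]_n).

Definition reflection w u := u - (2 * gdot u w / gdot w w) *: w.

Lemma gdot_reflection w u v : gdot (reflection w u) (reflection w v) = gdot u v.
Proof.
have [->|w0] := eqVneq w 0; first by rewrite /reflection !scaler0 !subr0.
rewrite /reflection !(gdotBl, gdotBr, gdotZl, gdotZr) (gdotC w v).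
by field; rewrite gdot_eq0.
Qed.

Lemma reflection_sub u e : gdot u u = gdot e e -> reflection (u - e) u = e.
Proof.
move=> ue; have [<-|] := eqVneq u e; first by rewrite subrr /reflection scaler0 subr0.
rewrite -subr_eq0 => w0.
have ww : gdot (u - e) (u - e) = 2 * gdot u (u - e).
  by rewrite !(gdotBl, gdotBr) ue (gdotC e u); ring.
have uw : gdot u (u - e) != 0.
  by apply: contraNneq w0 => uw0; rewrite -gdot_eq0 ww uw0 mulr0.
rewrite /reflection ww divff ?mulf_neq0 ?pnatr_eq0 //.
by rewrite scale1r opprB addrC subrK.
Qed.

End Reflection.

Lemma sum_kronecker (R : pzSemiRingType) p (a : 'I_p -> R) (j : 'I_p) :
  \sum_(i < p) a i * (i == j :> nat)%:R = a j.
Proof.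
rewrite (bigD1 j) //= eqxx mulr1 big1 ?addr0 // => i.
by rewrite -val_eqE => /negbTE ->; rewrite mulr0.
Qed.

Section OrthonormalFamilies.
Variables (R : realType) (n : nat).
Implicit Types (p : nat) (f g : nat -> 'rV[R]_n) (u : 'rV[R]_n).

Definition basis_mx p f : 'M[R]_(p, n) := \matrix_(i < p) f i.

Lemma basis_mx_coord p f u : Defs.orthonormal p f ->
  (u <= basis_mx p f)%MS -> u = \sum_(i < p) gdot u (f i) *: f i.
Proof.
move=> fON /submxP [D ->].
have -> : D *m basis_mx p f = \sum_(j < p) D 0 j *: f j.
  by rewrite mulmx_sum_row; apply: eq_bigr => j _; rewrite rowK.
apply: eq_bigr => i _; congr (_ *: _); rewrite gdot_suml.
rewrite (eq_bigr (fun j : 'I_p => D 0 j * (j == i :> nat)%:R)) ?sum_kronecker //.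
by move=> j _; rewrite gdotZl fON.
Qed.

Lemma rank_basis_mx p f : Defs.orthonormal p f -> \rank (basis_mx p f) = p.
Proof.
move=> fON; have gram : basis_mx p f *m (basis_mx p f)^T = 1%:M.
  apply/matrixP => i j; rewrite !mxE -(fON i j (ltn_ord i) (ltn_ord j)) gdotE.
  by apply: eq_bigr => k _; rewrite !mxE.
apply/eqP; rewrite eqn_leq rank_leq_row /=.
by rewrite -{1}(mxrank1 R p) -gram mxrankM_maxl.
Qed.

Lemma basis_mx_eqmx p f (U : 'M[R]_n) : Defs.orthonormal p f ->
  (forall i, (i < p)%N -> (f i <= U)%MS) -> \rank U = p -> (basis_mx p f == U)%MS.
Proof.
move=> fON fU rU; have sub : (basis_mx p f <= U)%MS.
  by apply/row_subP => i; rewrite rowK fU.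
apply/andP; split => //; by rewrite -(mxrank_leqif_sup sub).2 rU (rank_basis_mx fON).
Qed.

Lemma basis_mx2 f : (basis_mx 2 f :=: col_mx (f 0%N) (f 1%N))%MS.
Proof.
apply/eqmxP/andP; split.
  by apply/row_subP => -[[|[|//]] i2]; rewrite rowK -addsmxE ?addsmxSl ?addsmxSr.
rewrite col_mx_sub; apply/andP; split.
  by have := row_sub (0 : 'I_2) (basis_mx 2 f); rewrite rowK.
by have := row_sub (1 : 'I_2) (basis_mx 2 f); rewrite rowK.
Qed.

Section BilinearTrace.
Variable B : 'rV[R]_n -> 'rV[R]_n -> R.
Hypothesis BlinL : forall a u v w, B (a *: u + v) w = a * B u w + B v w.
Hypothesis BlinR : forall a u v w, B w (a *: u + v) = a * B w u + B w v.

Lemma bilinear_sum (I J : Type) (s : seq I) (s' : seq J) (c : I -> R) (d : J -> R)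
    (x : I -> 'rV[R]_n) (y : J -> 'rV[R]_n) :
  B (\sum_(i <- s) c i *: x i) (\sum_(j <- s') d j *: y j)
  = \sum_(i <- s) \sum_(j <- s') c i * d j * B (x i) (y j).
Proof.
have B0l w : B 0 w = 0 by have := BlinL 1 0 0 w; rewrite scaler0 addr0 mul1r; lra.
have B0r w : B w 0 = 0 by have := BlinR 1 0 0 w; rewrite scaler0 addr0 mul1r; lra.
elim/big_rec2: _ => [|i x' z _ <-]; first by rewrite B0l.
rewrite BlinL; congr (_ + _).
rewrite -(eq_bigr _ (fun j _ => mulrA _ _ _)) -big_distrr /=; congr (_ * _).
elim/big_rec2: _ => [|j y' z' _ <-]; first by rewrite B0r.
by rewrite BlinR.
Qed.

Lemma trace_orthonormal_eq p f g : Defs.orthonormal p f -> Defs.orthonormal p g ->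
  (forall i, (i < p)%N -> (f i <= basis_mx p g)%MS) ->
  (forall i, (i < p)%N -> (g i <= basis_mx p f)%MS) ->
  \sum_(i < p) B (f i) (f i) = \sum_(i < p) B (g i) (g i).
Proof.
move=> fON gON fg gf.
have f_in_g (i : 'I_p) := basis_mx_coord gON (fg i (ltn_ord i)).
under eq_bigr => i _ do rewrite f_in_g bilinear_sum.
rewrite exchange_big; apply: eq_bigr => k _ /=; rewrite exchange_big /=.
have parseval (j : 'I_p) :
    \sum_(i < p) gdot (f i) (g k) * gdot (f i) (g j) = (j == k :> nat)%:R.
  rewrite -(gON j k (ltn_ord j) (ltn_ord k)) [in RHS](basis_mx_coord fON (gf j (ltn_ord j))).
  by rewrite gdot_suml; apply: eq_bigr => i _; rewrite gdotZl !(gdotC (f i)) mulrC.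
under eq_bigr => j _ do rewrite -mulr_suml parseval mulrC.
exact: sum_kronecker.
Qed.

End BilinearTrace.
End OrthonormalFamilies.

Section VerticalHorizontal.
Variables (R : realType) (n : nat) (Vsp : 'M[R]_n).
Implicit Types (u e : 'rV[R]_n) (V W h : nat -> 'rV[R]_n).

Lemma horizontalP u : reflect (horizontal Vsp u) (u <= kermx Vsp^T)%MS.
Proof. exact: sub_kermxP. Qed.

Lemma Vbasis_eqmx r V : isVbasis Vsp r V -> \rank Vsp = r -> (basis_mx r V == Vsp)%MS.
Proof. by case=> VON VVsp; apply: basis_mx_eqmx. Qed.

Lemma Hbasis_eqmx m h : isHbasis Vsp m h -> \rank Vsp = (n - m)%N -> (m <= n)%N ->
  (basis_mx m h == kermx Vsp^T)%MS.
Proof.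
case=> hON hhor rVsp mn; apply: basis_mx_eqmx => // [l lm|].
  exact/horizontalP/hhor.
by rewrite mxrank_ker mxrank_tr rVsp subKn.
Qed.

Lemma horizontal_eq0 m h u : isHbasis Vsp m h -> \rank Vsp = (n - m)%N -> (m <= n)%N ->
  horizontal Vsp u -> (forall l, (l < m)%N -> gdot u (h l) = 0) -> u = 0.
Proof.
move=> hB rVsp mn /horizontalP uhor u_h.
have /eqmxP hK := Hbasis_eqmx hB rVsp mn.
rewrite (basis_mx_coord hB.1 (u := u)) ?hK // big1 // => l _.
by rewrite u_h // scale0r.
Qed.

Lemma Hbasis_through m h e : isHbasis Vsp m h -> (0 < m)%N ->
  horizontal Vsp e -> gdot e e = 1 ->
  exists h', isHbasis Vsp m h' /\ h' 0%N = e.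
Proof.
move=> [hON hhor] m0 /horizontalP ehor e1.
exists (fun l => reflection (h 0%N - e) (h l)); split; last first.
  by rewrite reflection_sub // e1 (hON 0%N 0%N m0 m0).
split=> [i j im jm|l lm]; first by rewrite gdot_reflection hON.
apply/horizontalP; rewrite /reflection.
have h_hor l' : (l' < m)%N -> (h l' <= kermx Vsp^T)%MS by move=> ?; apply/horizontalP/hhor.
by rewrite !(eqmx_opp, addmx_sub, scalemx_sub) ?h_hor.
Qed.

Lemma Hbasis_along m h x : isHbasis Vsp m h -> \rank Vsp = (n - m)%N -> (m <= n)%N ->
  horizontal Vsp x -> exists h', [/\ isHbasis Vsp m h',
    x != 0 -> h' 0%N = (Num.sqrt (normsq x))^-1 *: x &
    forall l, (1 <= l < m)%N -> gdot x (h' l) = 0].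
Proof.
move=> hB rVsp mn xhor; have [->|x0] := eqVneq x 0.
  by exists h; split=> // l _; rewrite gdot0l.
have m0 : (0 < m)%N.
  rewrite lt0n; apply: contraNneq x0 => m0.
  by apply/eqP/(horizontal_eq0 hB rVsp mn xhor) => l; rewrite m0.
have s0 : 0 < Num.sqrt (normsq x) by rewrite sqrtr_gt0 lt_def gdot_eq0 x0 gdot_ge0.
set e := (Num.sqrt (normsq x))^-1 *: x.
have e1 : gdot e e = 1.
  by rewrite gdotZl gdotZr mulrA -expr2 exprVn sqr_sqrtr ?gdot_ge0 // /normsq mulVf ?gdot_eq0.
have ehor : horizontal Vsp e by apply/horizontalP; rewrite scalemx_sub //; apply/horizontalP.
have [h' [h'B h'0]] := Hbasis_through hB m0 ehor e1.
exists h'; split=> // l /andP [l1 lm].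
have : gdot e (h' l) = 0 by rewrite -h'0 (h'B.1 0%N l m0 lm) -(subnKC l1).
by rewrite gdotZl => /eqP; rewrite mulf_eq0 invr_eq0 gt_eqF //= => /eqP.
Qed.

End VerticalHorizontal.

Lemma big_ord_first2 (V : nmodType) r (F : nat -> V) : (2 <= r)%N ->
  \sum_(i < r) F i = F 0%N + F 1%N + \sum_(2 <= i < r) F i.
Proof.
move=> r2; rewrite -(big_mkord xpredT) big_ltn; last exact: leq_trans r2.
by rewrite big_ltn // addrA.
Qed.

Lemma psum_nat_eq0 (R : numDomainType) m k (P : pred nat) (F : nat -> R) :
  (forall i, 0 <= F i) -> \sum_(m <= i < k | P i) F i = 0 ->
  forall i, (m <= i < k)%N -> P i -> F i = 0.
Proof.
move=> F0 /eqP; rewrite psumr_eq0 // => /allP F_eq0 i ik Pi.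
by apply/eqP; have := F_eq0 i; rewrite mem_index_iota ik Pi => /(_ isT).
Qed.

Section ChenDefect.
Variables (R : realFieldType) (n r : nat) (t : nat -> nat -> 'rV[R]_n).

Definition chen_defect : R :=
  let S := \sum_(i < r) t i i in
  2^-1 * (\sum_(i < r) \sum_(j < r) gdot (t i j) (t i j) - (r%:R - 1)^-1 * gdot S S)
  + (gdot (t 0%N 0%N) (t 1%N 1%N) - gdot (t 0%N 1%N) (t 0%N 1%N)).

(* Condition (E) before taking coordinates in the horizontal basis (indices from 0). *)
Definition chen_form : Prop :=
  [/\ forall j, (2 <= j < r)%N -> t 0%N j = 0 /\ t 1%N j = 0,
      forall i j, (2 <= i < r)%N -> (2 <= j < r)%N -> i <> j -> t i j = 0 &
      forall i, (2 <= i < r)%N -> t i i = t 0%N 0%N + t 1%N 1%N].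

Hypothesis r3 : (3 <= r)%N.
Hypothesis tsym : forall i j, (i < r)%N -> (j < r)%N -> t i j = t j i.

Let r2 : (2 <= r)%N. Proof. exact: ltnW. Qed.
Let r1_neq0 : (r%:R - 1 : R) != 0.
Proof. by rewrite subr_eq0 pnatr_eq1 gtn_eqF // (leq_trans _ r3). Qed.
Let nn i j := gdot (t i j) (t i j).
Let mu := (r%:R - 1)^-1 *: \sum_(i < r) t i i.

Lemma sum_gdot_blocks :
  \sum_(i < r) \sum_(j < r) nn i j =
  nn 0%N 0%N + 2 * nn 0%N 1%N + nn 1%N 1%N
  + 2 * (\sum_(2 <= j < r) nn 0%N j + \sum_(2 <= j < r) nn 1%N j)
  + \sum_(2 <= i < r) nn i i + \sum_(2 <= i < r) \sum_(2 <= j < r | j != i) nn i j.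
Proof.
have nn_sym i j : (i < r)%N -> (j < r)%N -> nn i j = nn j i by move=> ir jr; rewrite /nn tsym.
under eq_bigr => i _ do rewrite (big_ord_first2 (nn i)) //.
rewrite (big_ord_first2 (fun i => nn i 0%N + nn i 1%N + \sum_(2 <= j < r) nn i j)) //.
rewrite !big_split /= (nn_sym 1%N 0%N) ?(leq_trans _ r3) //.
have col k : (k < 2)%N -> \sum_(2 <= i < r) nn i k = \sum_(2 <= j < r) nn k j.
  by move=> k2; apply: eq_big_nat => i /andP [_ ir]; rewrite nn_sym // (leq_trans k2).
have diag_off : \sum_(2 <= i < r) \sum_(2 <= j < r) nn i j
    = \sum_(2 <= i < r) nn i i + \sum_(2 <= i < r) \sum_(2 <= j < r | j != i) nn i j.
  rewrite -big_split; apply: eq_big_nat => i ir.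
  by rewrite (bigD1_seq i) ?mem_index_iota ?iota_uniq.
rewrite col // col // diag_off; ring.
Qed.

Lemma sum_gdot_sub_mean :
  let a := t 0%N 0%N + t 1%N 1%N in
  gdot (a - mu) (a - mu) + \sum_(2 <= i < r) gdot (t i i - mu) (t i i - mu)
  = gdot a a + \sum_(2 <= i < r) nn i i
    - (r%:R - 1)^-1 * gdot (\sum_(i < r) t i i) (\sum_(i < r) t i i).
Proof.
move=> a; set S := \sum_(i < r) t i i; set P := \sum_(2 <= i < r) t i i.
have SaP : S = a + P by rewrite /S (big_ord_first2 (fun i => t i i)).
have -> : \sum_(2 <= i < r) gdot (t i i - mu) (t i i - mu)
    = \sum_(2 <= i < r) nn i i - 2 * gdot P mu + (r%:R - 2) * gdot mu mu.
  rewrite (eq_bigr (fun i => nn i i - 2 * gdot (t i i) mu + gdot mu mu)); last first.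
    by move=> i _; rewrite !(gdotBl, gdotBr) (gdotC mu); rewrite /nn; ring.
  rewrite big_split sumrB sumr_const_nat /P gdot_suml -mulr_sumr.
  by rewrite -[gdot mu mu *+ _]mulr_natl natrB.
rewrite /mu -/S SaP; clearbody a P.
rewrite !(gdotBl, gdotBr, gdotZl, gdotZr, gdotDl, gdotDr) (gdotC P a).
by field.
Qed.

Lemma chen_defect_sum_squares :
  chen_defect = 2^-1 * (2 * (\sum_(2 <= j < r) nn 0%N j + \sum_(2 <= j < r) nn 1%N j)
    + \sum_(2 <= i < r) \sum_(2 <= j < r | j != i) nn i j
    + gdot (t 0%N 0%N + t 1%N 1%N - mu) (t 0%N 0%N + t 1%N 1%N - mu)
    + \sum_(2 <= i < r) gdot (t i i - mu) (t i i - mu)).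
Proof.
rewrite -addrA sum_gdot_sub_mean /chen_defect sum_gdot_blocks.
rewrite !(gdotDl, gdotDr) (gdotC (t 1%N 1%N)) /nn.
by field.
Qed.

Lemma chen_form_trace : chen_form ->
  \sum_(i < r) t i i = (r%:R - 1) *: (t 0%N 0%N + t 1%N 1%N).
Proof.
case=> _ _ tdiag; rewrite (big_ord_first2 (fun i => t i i)) //.
rewrite (eq_big_nat _ _ tdiag) sumr_const_nat -scaler_nat natrB //.
by rewrite -[X in X + _ = _]scale1r -scalerDl; congr (_ *: _); ring.
Qed.

Lemma chen_defect_ge0 : 0 <= chen_defect.
Proof.
have nn_ge0 i j : 0 <= nn i j by apply: gdot_ge0.
rewrite chen_defect_sum_squares mulr_ge0 ?invr_ge0 //.
by rewrite !addr_ge0 ?mulr_ge0 ?addr_ge0 ?sumr_ge0 ?gdot_ge0 // => i _;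
  rewrite ?sumr_ge0 ?gdot_ge0.
Qed.

Lemma chen_defect_eq0 : chen_defect = 0 <-> chen_form.
Proof.
have nn_ge0 i j : 0 <= nn i j by apply: gdot_ge0.
have sq_eq0 (x : 'rV[R]_n) : gdot x x = 0 -> x = 0 by move/eqP; rewrite gdot_eq0 => /eqP.
rewrite chen_defect_sum_squares.
set E0 := \sum_(2 <= j < r) nn 0%N j; set E1 := \sum_(2 <= j < r) nn 1%N j.
set Off := \sum_(2 <= i < r) _; set A := gdot _ _.
set D := \sum_(2 <= i < r) gdot (t i i - mu) (t i i - mu).
have E0_ge0 : 0 <= E0 by apply: sumr_ge0.
have E1_ge0 : 0 <= E1 by apply: sumr_ge0.
have Off_ge0 : 0 <= Off by apply: sumr_ge0 => i _; apply: sumr_ge0.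
have A_ge0 : 0 <= A by apply: gdot_ge0.
have D_ge0 : 0 <= D by apply: sumr_ge0 => i _; apply: gdot_ge0.
split=> [defect0|tform].
  have [E00 E10 Off0 A0 D0] : [/\ E0 = 0, E1 = 0, Off = 0, A = 0 & D = 0] by split; lra.
  have mu_a : mu = t 0%N 0%N + t 1%N 1%N by apply/esym/subr0_eq/sq_eq0.
  split=> [j jr|i j ir jr ij|i ir].
  - by split; apply: sq_eq0; [exact: (psum_nat_eq0 _ E00 jr) | exact: (psum_nat_eq0 _ E10 jr)].
  - have Offi := psum_nat_eq0 (fun k => sumr_ge0 _ (fun j _ => nn_ge0 k j)) Off0 ir isT.
    by apply/sq_eq0/(psum_nat_eq0 (nn_ge0 i) Offi jr)/eqP => ji; apply: ij.
  - by rewrite -mu_a; apply/subr0_eq/sq_eq0/(psum_nat_eq0 _ D0 ir isT) => k; apply: gdot_ge0.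
have mu_a : mu = t 0%N 0%N + t 1%N 1%N.
  by rewrite /mu chen_form_trace // scalerA mulVf ?scale1r.
case: tform => t01 toff tdiag.
have -> : E0 = 0.
  by apply: big1_seq => j; rewrite mem_index_iota => /t01 [t0j _]; rewrite /nn t0j gdot0l.
have -> : E1 = 0.
  by apply: big1_seq => j; rewrite mem_index_iota => /t01 [_ t1j]; rewrite /nn t1j gdot0l.
have -> : Off = 0.
  apply: big1_seq => i; rewrite mem_index_iota => ir; apply: big1_seq => j.
  rewrite mem_index_iota => /andP [ji jr].
  by rewrite /nn toff ?gdot0l // => ij; rewrite ij eqxx in ji.
have -> : A = 0 by rewrite /A mu_a subrr gdot0l.
have -> : D = 0.
  by apply: big1_seq => i; rewrite mem_index_iota => ir; rewrite tdiag // mu_a subrr gdot0l.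
by rewrite !(mulr0, addr0).
Qed.

End ChenDefect.

Definition fibre_sff (R : realType) n (T : 'rV[R]_n -> 'rV[R]_n -> 'rV[R]_n)
  (V : nat -> 'rV[R]_n) (i j : nat) : 'rV[R]_n := T (V i) (V j).

Lemma orthonormal_le (R : realType) n p q (f : nat -> 'rV[R]_n) :
  (p <= q)%N -> Defs.orthonormal q f -> Defs.orthonormal p f.
Proof. by move=> pq fON i j ip jp; rewrite fON ?(leq_trans ip) ?(leq_trans jp). Qed.

Lemma basis_mx_row (R : realType) n p (f : nat -> 'rV[R]_n) i :
  (i < p)%N -> (f i <= basis_mx p f)%MS.
Proof. by move=> ip; have := row_sub (Ordinal ip) (basis_mx p f); rewrite rowK. Qed.

Section FibreSecondFundamentalForm.
Variables (R : realType) (n : nat) (Vsp : 'M[R]_n) (T : 'rV[R]_n -> 'rV[R]_n -> 'rV[R]_n).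
Hypothesis TlinL : forall a u v w, T (a *: u + v) w = a *: T u w + T v w.
Hypothesis TlinR : forall a u v w, T w (a *: u + v) = a *: T w u + T w v.
Hypothesis Tvert : forall u v, (u <= Vsp)%MS -> (v <= Vsp)%MS ->
  T u v = T v u /\ horizontal Vsp (T u v).

Lemma fibre_sff_sym r V : isVbasis Vsp r V ->
  forall i j, (i < r)%N -> (j < r)%N -> fibre_sff T V i j = fibre_sff T V j i.
Proof. by case=> _ VVsp i j ir jr; apply: (Tvert (VVsp i ir) (VVsp j jr)).1. Qed.

Lemma fibre_sff_horizontal r V : isVbasis Vsp r V ->
  forall i j, (i < r)%N -> (j < r)%N -> horizontal Vsp (fibre_sff T V i j).
Proof. by case=> _ VVsp i j ir jr; apply: (Tvert (VVsp i ir) (VVsp j jr)).2. Qed.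

Lemma fibre_sff_traces_eq p f g : Defs.orthonormal p f -> Defs.orthonormal p g ->
  (forall i, (i < p)%N -> (f i <= basis_mx p g)%MS) ->
  (forall i, (i < p)%N -> (g i <= basis_mx p f)%MS) ->
  \sum_(i < p) fibre_sff T f i i = \sum_(i < p) fibre_sff T g i i /\
  \sum_(i < p) \sum_(j < p) gdot (fibre_sff T f i j) (fibre_sff T f i j)
  = \sum_(i < p) \sum_(j < p) gdot (fibre_sff T g i j) (fibre_sff T g i j).
Proof.
move=> fON gON fg gf; split.
  apply/rowP => k; rewrite !summxE.
  by apply: (@trace_orthonormal_eq _ _ (fun x y => T x y 0 k)) => // a u v w;
    rewrite ?TlinL ?TlinR !mxE.
transitivity (\sum_(i < p) \sum_(j < p) gdot (T (f i) (g j)) (T (f i) (g j))).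
  apply: eq_bigr => i _.
  by apply: (@trace_orthonormal_eq _ _ (fun y y' => gdot (T (f i) y) (T (f i) y'))) => // a u v w;
    rewrite TlinR ?gdotDl ?gdotDr ?gdotZl ?gdotZr.
apply: (@trace_orthonormal_eq _ _ (fun x x' => \sum_(j < p) gdot (T x (g j)) (T x' (g j)))) => //
  a u v w; rewrite mulr_sumr -big_split; apply: eq_bigr => j _;
  by rewrite TlinL ?gdotDl ?gdotDr ?gdotZl ?gdotZr.
Qed.

Lemma plane_gauss_term f : T (f 0%N) (f 1%N) = T (f 1%N) (f 0%N) ->
  let t := fibre_sff T f in
  gdot (t 0%N 0%N) (t 1%N 1%N) - gdot (t 0%N 1%N) (t 0%N 1%N)
  = 2^-1 * (gdot (\sum_(i < 2) t i i) (\sum_(i < 2) t i i)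
            - \sum_(i < 2) \sum_(j < 2) gdot (t i j) (t i j)).
Proof.
move=> f01 t; rewrite !big_ord_recr !big_ord0 /= !add0r /t /fibre_sff -f01.
by rewrite !(gdotDl, gdotDr) (gdotC (T (f 1%N) (f 1%N))); field.
Qed.

Lemma chen_defect_basis_invariant r V W : (3 <= r)%N ->
  isVbasis Vsp r V -> isVbasis Vsp r W -> \rank Vsp = r ->
  (col_mx (W 0%N) (W 1%N) == col_mx (V 0%N) (V 1%N))%MS ->
  chen_defect r (fibre_sff T V) = chen_defect r (fibre_sff T W).
Proof.
move=> r3 VB WB rVsp /eqmxP WV; have r2 : (2 <= r)%N := ltnW r3.
have /eqmxP VK := Vbasis_eqmx VB rVsp; have /eqmxP WK := Vbasis_eqmx WB rVsp.
have VinW i : (i < r)%N -> (V i <= basis_mx r W)%MS by move=> ir; rewrite WK VB.2.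
have WinV i : (i < r)%N -> (W i <= basis_mx r V)%MS by move=> ir; rewrite VK WB.2.
have [trS trN] := fibre_sff_traces_eq VB.1 WB.1 VinW WinV.
have VinW2 i : (i < 2)%N -> (V i <= basis_mx 2 W)%MS.
  by move=> i2; rewrite basis_mx2 WV -basis_mx2 basis_mx_row.
have WinV2 i : (i < 2)%N -> (W i <= basis_mx 2 V)%MS.
  by move=> i2; rewrite basis_mx2 -WV -basis_mx2 basis_mx_row.
have [planeS planeN] :=
  fibre_sff_traces_eq (orthonormal_le r2 VB.1) (orthonormal_le r2 WB.1) VinW2 WinV2.
have sym f : isVbasis Vsp r f -> T (f 0%N) (f 1%N) = T (f 1%N) (f 0%N).
  by move=> fB; apply: (fibre_sff_sym fB); rewrite (leq_trans _ r3).
by rewrite /chen_defect trS trN !plane_gauss_term ?sym // planeS planeN.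
Qed.

Section ConditionE.
Variables (m : nat) (V : nat -> 'rV[R]_n).
Let r := (n - m)%N.
Hypothesis rVsp : \rank Vsp = r.
Hypothesis r3 : (3 <= r)%N.

Let mn : (m <= n)%N.
Proof. by apply: ltnW; rewrite -subn_gt0 (leq_trans _ r3). Qed.

Lemma chen_form_basis_of_condE : condE Vsp T r m V ->
  exists W, [/\ isVbasis Vsp r W, (col_mx (W 0%N) (W 1%N) == col_mx (V 0%N) (V 1%N))%MS
              & chen_form r (fibre_sff T W)].
Proof.
case=> W [h [WB hB WV _ [c01 coff cH c11 cdiag]]].
exists W; split=> //.
have tW_eq0 i j : (i < r)%N -> (j < r)%N ->
    (forall l, (l < m)%N -> gdot (fibre_sff T W i j) (h l) = 0) -> fibre_sff T W i j = 0.
  by move=> ir jr; apply: horizontal_eq0 hB rVsp mn (fibre_sff_horizontal WB ir jr).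
have r0 : (0 < r)%N by rewrite (leq_trans _ r3).
have r1 : (1 < r)%N by rewrite (leq_trans _ r3).
have ltr i : (2 <= i < r)%N -> (i < r)%N by case/andP.
split=> [j jr|i j ir jr ij|i ir].
- by split; apply: tW_eq0 (ltr j jr) _ => // l lm; have [] := c01 l j lm jr.
- by apply: tW_eq0 (ltr i ir) (ltr j jr) _ => -[|l] lm; [apply: coff | apply: cH].
- apply/eqP; rewrite -subr_eq0; apply/eqP/(horizontal_eq0 hB rVsp mn).
    have tWhor k l : (k < r)%N -> (l < r)%N -> (fibre_sff T W k l <= kermx Vsp^T)%MS.
      by move=> kr lr; apply/horizontalP/(fibre_sff_horizontal WB).
    by apply/horizontalP; rewrite !(eqmx_opp, addmx_sub) ?tWhor ?(ltr i ir).
  case=> [|l] lm; rewrite gdotBl gdotDl /fibre_sff; first by rewrite (cdiag i ir) subrr.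
  by rewrite (cH _ i i _ ir ir) ?(c11 l.+1) ?subrr.
Qed.

Hypothesis VB : isVbasis Vsp r V.

Lemma chen_form_of_condE : condE Vsp T r m V -> chen_form r (fibre_sff T V).
Proof.
case/chen_form_basis_of_condE=> W [WB WV Wform].
apply/(chen_defect_eq0 r3 (fibre_sff_sym VB)).
rewrite (chen_defect_basis_invariant r3 VB WB rVsp WV).
exact/(chen_defect_eq0 r3 (fibre_sff_sym WB)).
Qed.

Lemma condE_of_chen_form h : isHbasis Vsp m h -> chen_form r (fibre_sff T V) ->
  condE Vsp T r m V.
Proof.
move=> hB Vform; set H := meanCurv T r V.
have r0 : (r%:R : R) != 0 by rewrite pnatr_eq0 -lt0n (leq_trans _ r3).
have r1 : (r%:R - 1 : R) != 0 by rewrite subr_eq0 pnatr_eq1 gtn_eqF // (leq_trans _ r3).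
have plane_H : fibre_sff T V 0 0 + fibre_sff T V 1 1 = (r%:R / (r%:R - 1)) *: H.
  rewrite /H /meanCurv (chen_form_trace r3 Vform) !scalerA.
  have -> : r%:R / (r%:R - 1) / r%:R * (r%:R - 1) = 1 :> R by field; rewrite r0.
  by rewrite scale1r.
have Hhor : horizontal Vsp H.
  apply/horizontalP; rewrite scalemx_sub // summx_sub // => i _.
  exact/horizontalP/(fibre_sff_horizontal VB).
have [h' [h'B h'0 H_h']] := Hbasis_along hB rVsp mn Hhor.
have plane_h' l : (1 <= l < m)%N -> gdot (fibre_sff T V 0 0 + fibre_sff T V 1 1) (h' l) = 0.
  by move=> lm; rewrite plane_H gdotZl H_h' ?mulr0.
case: Vform => t01 toff tdiag.
exists V, h'; split=> //; first exact/eqmxP.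
split=> [l j _ jr|i j ir jr ij|l i j lm ir jr|l lm|j jr].
- by rewrite /fibre_sff in t01; rewrite !(t01 j jr).1 !(t01 j jr).2 !gdot0l.
- by rewrite [T _ _]toff ?gdot0l.
- have [<-|ij] := eqVneq i j; first by rewrite [T _ _]tdiag ?plane_h'.
  by rewrite [T _ _]toff ?gdot0l //; apply/eqP.
- by rewrite -gdotDl plane_h'.
- by rewrite -gdotDl [T (V j) _]tdiag.
Qed.

End ConditionE.

End FibreSecondFundamentalForm.

Lemma trmx_complex_structure (R : comNzRingType) n (J : 'M[R]_n) :
  J *m J = - 1%:M -> J *m J^T = 1%:M -> J^T = - J.
Proof.
move=> J2 Jorth; have : J^T *m (J *m J) = J by rewrite mulmxA (mulmx1C Jorth) mul1mx.
by rewrite J2 mulmxN mulmx1 => JtJ; rewrite -[in RHS]JtJ opprK.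
Qed.

Section ComplexSpaceForm.
Variables (R : realType) (n : nat) (c : R) (J : 'M[R]_n).
Hypothesis J_skew : J^T = - J.
Implicit Types (u v : 'rV[R]_n) (V : nat -> 'rV[R]_n).

Lemma gdot_mulmxJr u v : gdot u (v *m J) = - gdot (u *m J) v.
Proof. by rewrite /gdot trmx_mul J_skew mulNmx mulmxN mulmxA mxE. Qed.

Lemma gdot_mulmxJ_self u : gdot u (u *m J) = 0.
Proof. by apply/eqP; rewrite -eqNr {2}gdot_mulmxJr gdotC. Qed.

Lemma RM_orthonormal_pair u v : gdot u u = 1 -> gdot v v = 1 ->
  RM c J u v v u = c / 4 * (1 - gdot u v ^+ 2) + 3 * c / 4 * gdot u (v *m J) ^+ 2.
Proof.
move=> u1 v1; rewrite /RM !(gdotDl, gdotNl, gdotZl) u1 v1 (gdotC v u) (gdotC (v *m J) u).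
by rewrite !gdot_mulmxJ_self; ring.
Qed.

Lemma Qop_gdot r V i j : Defs.orthonormal r V -> (j < r)%N ->
  gdot (Qop r J V (V i)) (V j) = gdot (V i *m J) (V j).
Proof.
move=> VON jr; rewrite /Qop /vpart gdot_suml.
rewrite (eq_bigr (fun k : 'I_r => gdot (V i *m J) (V k) * (k == Ordinal jr :> nat)%:R)).
  by rewrite sum_kronecker.
by move=> k _; rewrite gdotZl VON.
Qed.

Lemma sum_RM_orthonormal r V : Defs.orthonormal r V ->
  \sum_(i < r) \sum_(j < r) RM c J (V i) (V j) (V j) (V i)
  = c / 4 * (r%:R ^+ 2 - r%:R) + 3 * c / 4 * normQ2 r J V.
Proof.
move=> VON.
have RMij (i j : 'I_r) : RM c J (V i) (V j) (V j) (V i)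
    = c / 4 - c / 4 * (i == j :> nat)%:R + 3 * c / 4 * gdot (Qop r J V (V j)) (V i) ^+ 2.
  rewrite RM_orthonormal_pair ?VON ?eqxx // Qop_gdot // [in RHS]gdotC.
  have bool_sq (b : bool) : (b%:R : R) ^+ 2 = b%:R by case: b; rewrite ?expr1n ?expr0n.
  by rewrite bool_sq; ring.
have column (j : 'I_r) : \sum_(i < r) RM c J (V i) (V j) (V j) (V i)
    = c / 4 * (r%:R - 1) + 3 * c / 4 * \sum_(i < r) gdot (Qop r J V (V j)) (V i) ^+ 2.
  rewrite (eq_bigr _ (fun i _ => RMij i j)) !big_split /= sumr_const card_ord sumrN.
  by rewrite (sum_kronecker (fun _ => c / 4)) -mulr_sumr -mulr_natr; ring.
rewrite exchange_big /= (eq_bigr _ (fun j _ => column j)) big_split /= sumr_const card_ord.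
by rewrite /normQ2 -mulr_sumr -mulr_natr; ring.
Qed.

Definition chen_bound (T : 'rV[R]_n -> 'rV[R]_n -> 'rV[R]_n) r V : R :=
  2^-1 * (c / 4 * (r%:R ^+ 2 - r%:R - 2)
          + 3 * c / 4 * (normQ2 r J V - 2 * (gdot (V 0%N) (Qop r J V (V 1%N))) ^+ 2)
          - r%:R ^+ 2 * (r%:R - 2) / (r%:R - 1) * normsq (meanCurv T r V)).

Lemma tauV_sub_KV T r V : (3 <= r)%N -> Defs.orthonormal r V ->
  (forall i j, (i < r)%N -> (j < r)%N -> fibre_sff T V i j = fibre_sff T V j i) ->
  tauV c J T r V - KV c J T V = chen_bound T r V + chen_defect r (fibre_sff T V).
Proof.
move=> r3 VON tsym; set t := fibre_sff T V; set S := \sum_(i < r) t i i.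
have r0 : (0 < r)%N by rewrite (leq_trans _ r3).
have r1 : (1 < r)%N by rewrite (leq_trans _ r3).
have r0_neq0 : (r%:R : R) != 0 by rewrite pnatr_eq0 -lt0n.
have r1_neq0 : (r%:R - 1 : R) != 0 by rewrite subr_eq0 pnatr_eq1 gtn_eqF.
have gauss : \sum_(i < r) \sum_(j < r) Rker c J T (V i) (V j) (V j) (V i)
    = \sum_(i < r) \sum_(j < r) RM c J (V i) (V j) (V j) (V i)
      - gdot S S + \sum_(i < r) \sum_(j < r) gdot (t i j) (t i j).
  rewrite /S gdot_suml -sumrB -big_split; apply: eq_bigr => i _ /=.
  rewrite gdot_sumr -sumrB -big_split; apply: eq_bigr => j _ /=.
  by rewrite /Rker [T (V j) (V i)]tsym.
have QV01 : gdot (V 0%N) (Qop r J V (V 1%N)) ^+ 2 = gdot (V 0%N) (V 1%N *m J) ^+ 2.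
  by rewrite gdotC Qop_gdot // gdotC.
rewrite /tauV /KV gauss sum_RM_orthonormal // /Rker RM_orthonormal_pair ?VON //=.
rewrite /chen_bound QV01 /meanCurv /normsq gdotZl gdotZr -/S /chen_defect.
rewrite [T (V 1%N) (V 0%N)](tsym 1%N 0%N) // -/S /t /fibre_sff.
by field; rewrite r1_neq0.
Qed.

End ComplexSpaceForm.

Theorem mainTheorem4 (R : realType) (k m : nat) (c : R)
  (J Vsp : 'M[R]_(2 * k))
  (T : 'rV[R]_(2 * k) -> 'rV[R]_(2 * k) -> 'rV[R]_(2 * k))
  (V h : nat -> 'rV[R]_(2 * k)) :
  J *m J = - 1%:M -> J *m J^T = 1%:M ->
  \rank Vsp = (2 * k - m)%N -> (2 < 2 * k - m)%N ->
  (forall (a : R) u v w, T (a *: u + v) w = a *: T u w + T v w) ->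
  (forall (a : R) u v w, T w (a *: u + v) = a *: T w u + T w v) ->
  (forall u v, (u <= Vsp)%MS -> (v <= Vsp)%MS ->
     T u v = T v u /\ horizontal Vsp (T u v)) ->
  isVbasis Vsp (2 * k - m) V -> isHbasis Vsp m h ->
  let r := (2 * k - m)%N in
  let rhs := 2^-1 * (c / 4 * (r%:R ^+ 2 - r%:R - 2)
              + 3 * c / 4 * (normQ2 r J V - 2 * (gdot (V 0%N) (Qop r J V (V 1%N))) ^+ 2)
              - r%:R ^+ 2 * (r%:R - 2) / (r%:R - 1) * normsq (meanCurv T r V)) in
  tauV c J T r V - KV c J T V >= rhs /\
  (tauV c J T r V - KV c J T V = rhs <-> condE Vsp T r m V).
Proof.
move=> J2 Jorth rVsp r3 TlinL TlinR Tvert VB hB r rhs; rewrite {}/rhs {}/r.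
have tsym := fibre_sff_sym Tvert VB.
rewrite -/(chen_bound c J T _ V) (tauV_sub_KV c (trmx_complex_structure J2 Jorth) r3 VB.1 tsym).
split; first by rewrite lerDl chen_defect_ge0.
rewrite -[X in _ = X <-> _]addr0; split=> [/addrI defect0|E].
  apply: (condE_of_chen_form Tvert rVsp r3 VB hB).
  exact/(chen_defect_eq0 r3 tsym).
by rewrite (chen_defect_eq0 r3 tsym).2 //; apply: chen_form_of_condE E.
Qed.
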